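(* For $n\ge 4$, the network space $\mathfrak S_n$ is a connected simplicial complex of dimension $n(n-3)/2-1$, whose $k$-simplices correspond bijectively to the split systems consisting of $k+1$ nontrivial splits that are circular with respect to some circular ordering of $X$ (equivalently, to labeled $n$-gons with $k+1$ diagonals, two labeled polygons being identified when they represent the same split system).
   Context: $X$ is a set of $n\ge4$ labels. A split of $X$ is an unordered partition $\{A,B\}$ of $X$ into two nonempty sets; it is trivial if one part has one element. A circular ordering of $X$ is a cyclic arrangement $\pi=(x_1,\dots,x_n)$ up to rotation and reflection; a split is circular w.r.t. $\pi$ if it has the form $\{\{x_{i+1},\dots,x_j\},X\setminus\{x_{i+1},\dots,x_j\}\}$ (indices mod $n$); it then corresponds to a diagonal of a regular $n$-gon whose edges are labeled cyclically by $\pi$. Let $\delta=2^{n-1}-n-1$ be the number of nontrivial splits and give $\mathbb R^\delta$ coordinates indexed by nontrivial splits. For each circular ordering $\pi$ let $O_\pi\subset\mathbb R^\delta$ be the set of nonnegative vectors whose support consists of splits circular w.r.t. $\pi$. The space of circular split networks is $\mathrm{CSN}_n=\bigcup_\pi O_\pi$, and the network space is $\mathfrak S_n=\{x\in \mathrm{CSN}_n:\sum x_s=1\}=\bigcup_\pi \Delta_\pi$ where $\Delta_\pi=O_\pi\cap\{\sum x_s=1\}$ is a simplex (a chamber); faces of chambers are the sets of points whose support lies in a given subsystem. *)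

From Stdlib Require Import Reals.
From mathcomp Require Import ssreflect ssrfun ssrbool eqtype ssrnat seq choice
  div fintype finfun bigop finset fingroup perm.

Set Implicit Arguments.
Unset Strict Implicit.
Unset Printing Implicit Defensive.

Definition is_ntsplit (n : nat) (P : {set {set 'I_n}}) : bool :=
  [exists A : {set 'I_n}, [&& P == [set A; ~: A], 1 < #|A| & 1 < #|~: A|]].

(* The finite type of nontrivial splits: it indexes the coordinates of R^delta. *)
Definition nsplit (n : nat) := {P : {set {set 'I_n}} | is_ntsplit P}.

(* A circular ordering pi = (x_0, ..., x_{n-1}) is given by a permutation:
   x_k = pi k; the position of label x is pi^-1 x.  The part
   {x_{i+1}, ..., x_{i+m}} (indices mod n) is the set of labels x with
   1 <= (pos x - i) mod n <= m. *)
Definition cyc_part (n : nat) (pi : {perm 'I_n}) (i : 'I_n) (m : nat)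
  : {set 'I_n} :=
  [set x | 0 < ((pi^-1)%g x + n - i) %% n <= m].

Definition circ (n : nat) (pi : {perm 'I_n}) (P : {set {set 'I_n}}) : Prop :=
  exists (i : 'I_n) (m : nat), P = [set cyc_part pi i m; ~: cyc_part pi i m].

Definition circsys (n : nat) (S : {set nsplit n}) : Prop :=
  exists pi : {perm 'I_n}, forall s, s \in S -> circ pi (val s).

Definition Rsum (I : finType) (f : I -> R) : R := \big[Rplus/R0]_(i : I) f i.

Definition chamber (n : nat) (pi : {perm 'I_n}) (x : nsplit n -> R) : Prop :=
  (forall s, Rle R0 (x s)) /\ Rsum x = R1 /\
  (forall s, x s <> R0 -> circ pi (val s)).

Definition network (n : nat) (x : nsplit n -> R) : Prop :=
  exists pi : {perm 'I_n}, chamber pi x.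

Definition chamber_face (n : nat) (pi : {perm 'I_n}) (S : {set nsplit n})
  (x : nsplit n -> R) : Prop :=
  chamber pi x /\ (forall s, x s <> R0 -> s \in S).

Definition unitv (n : nat) (s : nsplit n) : nsplit n -> R :=
  fun t => if t == s then R1 else R0.

Section Geom.
Variables (I J : finType) (p : I -> J -> R).
(* p : vertex placement, vertices I, points of R^J. *)

Definition conv (sigma : {set I}) (x : J -> R) : Prop :=
  exists lam : I -> R,
    (forall i, Rle R0 (lam i)) /\ (forall i, i \notin sigma -> lam i = R0) /\
    Rsum lam = R1 /\ (forall j, x j = Rsum (fun i => Rmult (lam i) (p i j))).

Definition aff_indep (sigma : {set I}) : Prop :=
  forall c : I -> R, (forall i, i \notin sigma -> c i = R0) ->
    Rsum c = R0 -> (forall j, Rsum (fun i => Rmult (c i) (p i j)) = R0) ->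
    forall i, c i = R0.

Definition geom_complex (K : {set I} -> Prop) : Prop :=
  (forall sigma, K sigma -> sigma != set0 /\ aff_indep sigma) /\
  (forall sigma tau : {set I}, K sigma -> tau \subset sigma -> tau != set0 -> K tau) /\
  (forall sigma tau : {set I}, K sigma -> K tau ->
     forall x, (conv sigma x /\ conv tau x) <-> conv (sigma :&: tau) x).

Definition polyhedron (K : {set I} -> Prop) (x : J -> R) : Prop :=
  exists sigma, K sigma /\ conv sigma x.

Definition complex_dim (K : {set I} -> Prop) (d : nat) : Prop :=
  (exists sigma, K sigma /\ #|sigma|.-1 = d) /\
  (forall sigma, K sigma -> #|sigma|.-1 <= d).
End Geom.

Definition ball (J : finType) (x : J -> R) (eps : R) (y : J -> R) : Prop :=
  forall j, Rlt (Rabs (Rminus (y j) (x j))) eps.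

Definition relopen (J : finType) (A U : (J -> R) -> Prop) : Prop :=
  forall x, A x -> U x -> exists eps, Rlt R0 eps /\
    forall y, A y -> ball x eps y -> U y.

Definition connected (J : finType) (A : (J -> R) -> Prop) : Prop :=
  forall U W : (J -> R) -> Prop, relopen A U -> relopen A W ->
    (forall x, A x -> U x \/ W x) -> (forall x, A x -> U x -> W x -> False) ->
    (forall x, A x -> ~ U x) \/ (forall x, A x -> ~ W x).

Definition circ_complex (n : nat) (S : {set nsplit n}) : Prop :=
  S != set0 /\ circsys S.

(* The face of the chamber Delta_pi supported on a subsystem S is the simplex
   spanned by the unit vectors e_s, s in S.  Hence the network space is the
   subcomplex of the standard simplex on the nontrivial splits whose simplices
   are the circular split systems, and distinct systems span distinct
   simplices.  For a fixed ordering the circular nontrivial splits are the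
   n(n-3)/2 diagonals of the n-gon, which gives the dimension.  Finally every
   chamber is convex, and two nontrivial splits {A, X\A}, {C, X\C} are always
   circular for a common ordering (list A∩C, A\C, X\(A∪C), C\A), so segments
   between unit vectors link any two chambers. *)
From HB Require Import structures.
From Stdlib Require Import Reals Lra Classical FunctionalExtensionality.
From mathcomp Require Import ssreflect ssrfun ssrbool eqtype ssrnat seq choice
  div fintype finfun bigop finset fingroup perm.
From mathcomp Require Import zify.

Set Implicit Arguments.
Unset Strict Implicit.
Unset Printing Implicit Defensive.

Lemma RplusA : associative Rplus.
Proof. by move=> *; rewrite Rplus_assoc. Qed.

HB.instance Definition _ :=
  Monoid.isComLaw.Build R R0 Rplus RplusA Rplus_comm Rplus_0_l.

Lemma Rsum_eq0 (I : finType) (f : I -> R) : (forall i, f i = 0%R) -> Rsum f = 0%R.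
Proof. by move=> f0; rewrite /Rsum big1. Qed.

Lemma Rsum_ge0 (I : finType) (f : I -> R) :
  (forall i, 0 <= f i)%R -> (0 <= Rsum f)%R.
Proof. by move=> f0; apply: (big_ind (fun r => 0 <= r)%R) => //; [lra | move=> a b; lra]. Qed.

Lemma Rsum_ge_term (I : finType) (f : I -> R) (j : I) :
  (forall i, 0 <= f i)%R -> (f j <= Rsum f)%R.
Proof.
move=> f0; rewrite /Rsum (bigD1 j) //=.
have : (0 <= \big[Rplus/R0]_(i | i != j) f i)%R.
  by apply: (big_ind (fun r => 0 <= r)%R) => //; [lra | move=> a b; lra].
lra.
Qed.

Lemma Rsum_dirac (I : finType) (lam : I -> R) (j : I) :
  Rsum (fun i => lam i * (if j == i then 1 else 0))%R = lam j.
Proof.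
rewrite /Rsum (bigD1 j) //= eqxx big1 ?Rmult_1_r ?Rplus_0_r //.
by move=> i /negbTE; rewrite eq_sym => ->; rewrite Rmult_0_r.
Qed.

Lemma Rsum1_support (I : finType) (x : I -> R) :
  Rsum x = 1%R -> exists s, x s <> 0%R.
Proof.
move=> x1; apply: NNPP => x0.
have : Rsum x = 0%R.
  by apply: Rsum_eq0 => s; apply: NNPP => xs; apply: x0; exists s.
by rewrite x1; exact: R1_neq_R0.
Qed.

Definition Rneqb (r : R) : bool := if Req_EM_T r 0%R then false else true.

Lemma RneqbP (r : R) : Rneqb r <-> r <> 0%R.
Proof. by rewrite /Rneqb; case: Req_EM_T. Qed.

Section UnitVectors.
Variable n : nat.
Implicit Types (S T : {set nsplit n}) (x : nsplit n -> R).

Lemma Rsum_unitv (s : nsplit n) : Rsum (unitv s) = 1%R.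
Proof. by rewrite /Rsum (bigD1 s) //= /unitv eqxx big1 ?Rplus_0_r // => t /negbTE ->. Qed.

Lemma unitv_ge0 (s t : nsplit n) : (0 <= unitv s t)%R.
Proof. by rewrite /unitv; case: eqP => _; lra. Qed.

Lemma conv_unitvP S x :
  conv (@unitv n) S x <->
  (forall s, 0 <= x s)%R /\ (forall s, s \notin S -> x s = 0%R) /\ Rsum x = 1%R.
Proof.
split.
- move=> [lam [lam0 [lamS [lam1 xE]]]].
  have {}xE j : x j = lam j by rewrite xE; exact: Rsum_dirac.
  split; first by move=> s; rewrite xE.
  split; first by move=> s sNS; rewrite xE lamS.
  by rewrite -[RHS]lam1 /Rsum; apply: eq_bigr => i _; rewrite xE.
- move=> [x0 [xS x1]]; exists x; do 3 split => //.
  by move=> j; rewrite Rsum_dirac.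
Qed.

Lemma support_sub_conv S x : conv (@unitv n) S x -> forall s, x s <> 0%R -> s \in S.
Proof.
by move=> /conv_unitvP [_ [xS _]] s xs; apply/negPn/negP => /xS.
Qed.

Lemma conv_unitv_mem S s : s \in S -> conv (@unitv n) S (unitv s).
Proof.
move=> sS; apply/conv_unitvP; split; first exact: unitv_ge0.
split; last exact: Rsum_unitv.
by move=> t; rewrite /unitv; case: eqP => // ->; rewrite sS.
Qed.

Lemma conv_unitv_inj S T :
  (forall x, conv (@unitv n) S x <-> conv (@unitv n) T x) -> S = T.
Proof.
have sub S' T' : (forall x, conv (@unitv n) S' x -> conv (@unitv n) T' x) -> S' \subset T'.
  move=> ST; apply/subsetP => s /conv_unitv_mem /ST /support_sub_conv; apply.
  by rewrite /unitv eqxx; exact: R1_neq_R0.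
by move=> ST; apply/eqP; rewrite eqEsubset !sub // => x /ST.
Qed.

Lemma chamber_faceE (pi : {perm 'I_n}) S :
  (forall s, s \in S -> circ pi (val s)) ->
  forall x, chamber_face pi S x <-> conv (@unitv n) S x.
Proof.
move=> Scirc x; rewrite conv_unitvP; split.
- move=> [[x0 [x1 _]] xS]; do 2 split => //.
  by move=> s sNS; apply: NNPP => /xS; rewrite (negbTE sNS).
- move=> [x0 [xS x1]].
  have supp s : x s <> 0%R -> s \in S.
    by move=> xs; apply/negPn/negP => /xS.
  by split=> //; split=> //; split=> // s /supp /Scirc.
Qed.

Lemma geom_complex_circ : geom_complex (@unitv n) (@circ_complex n).
Proof.
split; [|split].
- move=> sigma [sigma0 _]; split => // c _ _ c0 i.
  by rewrite -(c0 i) /unitv Rsum_dirac.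
- move=> sigma tau [_ [pi circ_sigma]] tau_sigma tau0; split => //.
  by exists pi => s /(subsetP tau_sigma) /circ_sigma.
- move=> sigma tau _ _ x; rewrite !conv_unitvP; split.
  + move=> [[x0 [xsigma x1]] [_ [xtau _]]]; do 2 split => //.
    by move=> s; rewrite inE negb_and => /orP [/xsigma|/xtau].
  + move=> [x0 [xI x1]].
    by split; (split; [|split]) => // s sN; apply: xI; rewrite inE (negbTE sN) ?andbF.
Qed.

Lemma network_polyhedronE x :
  network x <-> polyhedron (@unitv n) (@circ_complex n) x.
Proof.
split.
- move=> [pi [x0 [x1 xcirc]]].
  have suppE s : s \notin [set t | Rneqb (x t)] -> x s = 0%R.
    by rewrite inE => /negP xs; apply: NNPP => /RneqbP.
  exists [set s | Rneqb (x s)]; split; last by apply/conv_unitvP.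
  split; last by exists pi => s; rewrite inE => /RneqbP /xcirc.
  apply/set0Pn; have [s /RneqbP xs] := Rsum1_support x1.
  by exists s; rewrite inE.
- move=> [S [[_ [pi Scirc]] xS]]; exists pi.
  have /conv_unitvP [x0 [_ x1]] := xS.
  by split; [|split] => // s /(support_sub_conv xS) /Scirc.
Qed.

End UnitVectors.

Lemma modn_offset (n a i : nat) : a < n -> i < n ->
  (a + n - i) %% n = if i <= a then a - i else a + n - i.
Proof.
move=> an ilt; case: leqP => ia; last by rewrite modn_small //; lia.
by rewrite (_ : a + n - i = a - i + n) ?modnDr ?modn_small //; lia.
Qed.

Lemma sum_range_indicator (a b N : nat) :
  \sum_(m < N) ((a <= m) && (m < b)) = minn b N - a.
Proof.
elim: N => [|N IH]; first by rewrite big_ord0; lia.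
by rewrite big_ord_recr /= IH; case: (leqP a N); case: (ltnP N b) => /=; lia.
Qed.

Lemma double_sum_subn1 (N : nat) : (\sum_(i < N) (i - 1)).*2 = (N - 1) * (N - 2).
Proof.
elim: N => [|N IH]; first by rewrite big_ord0.
by rewrite big_ord_recr /= doubleD IH; case: N {IH} => [|N] //=; nia.
Qed.

(* The pair (i, m) codes the diagonal cutting off {x_(i+1), ..., x_(i+m)};
   the condition i + m < n selects the side not containing x_0, so that each
   diagonal has exactly one code. *)
Definition diagonals (n : nat) : {set 'I_n * 'I_n} :=
  [set p : 'I_n * 'I_n | [&& 1 < p.2, p.2 <= n - 2 & p.1 + p.2 < n]].

Definition diag_split (n : nat) (pi : {perm 'I_n}) (p : 'I_n * 'I_n) :=
  [set cyc_part pi p.1 p.2; ~: cyc_part pi p.1 p.2].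

Lemma card_diagonals (n : nat) : 3 <= n -> (#|diagonals n|).*2 = n * (n - 3).
Proof.
move=> n3.
have -> : #|diagonals n| = \sum_(i < n) \sum_(j < n) ((1 < j) && (j <= n - 2) && (i + j < n)).
  rewrite pair_bigA -sum1_card big_mkcond /=; apply: eq_bigr => p _.
  by rewrite inE andbA; case: ifP.
have -> : \sum_(i < n) \sum_(j < n) ((1 < j) && (j <= n - 2) && (i + j < n)) =
          \sum_(i < n) (minn (minn (n - 1) (n - i)) n - 2).
  by apply: eq_bigr => i _; rewrite -sum_range_indicator; apply: eq_bigr => j _; lia.
case: n n3 => [|N] // n3.
rewrite (reindex_inj rev_ord_inj) /= big_ord_recr /=.
have -> : \sum_(i < N) (minn (minn (N.+1 - 1) (N.+1 - (N.+1 - i.+1))) N.+1 - 2) =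
          \sum_(i < N) (i - 1).
  by apply: eq_bigr => i _; have := ltn_ord i; lia.
by rewrite doubleD double_sum_subn1; lia.
Qed.

Section CircularSplits.
Variables (n : nat) (pi : {perm 'I_n}).

Lemma card_cyc_part_le1 (i : 'I_n) (m : nat) : m <= 1 -> #|cyc_part pi i m| <= 1.
Proof.
move=> m1; apply/card_le1_eqP => x y; rewrite !inE !modn_offset //.
move: (ltn_ord ((pi^-1)%g x)) (ltn_ord ((pi^-1)%g y)) (ltn_ord i) => xn yn ilt.
by move=> hx hy; apply: (@perm_inj _ pi^-1); apply: ord_inj; move: hx hy; case: ifP; case: ifP; lia.
Qed.

Lemma card_cyc_partC_le1 (i : 'I_n) (m : nat) : n.-1 <= m -> #|~: cyc_part pi i m| <= 1.
Proof.
move=> m1; apply/card_le1_eqP => x y; rewrite !inE !modn_offset //.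
move: (ltn_ord ((pi^-1)%g x)) (ltn_ord ((pi^-1)%g y)) (ltn_ord i) => xn yn ilt.
by move=> hx hy; apply: (@perm_inj _ pi^-1); apply: ord_inj; move: hx hy; case: ifP; case: ifP; lia.
Qed.

Lemma cyc_part_wrapC (i : 'I_n) (m : nat) (j : 'I_n) :
  m < n -> n <= i + m -> j = i + m - n :> nat ->
  cyc_part pi j (n - m) = ~: cyc_part pi i m.
Proof.
move=> mn wrap jE; apply/setP => x; rewrite !inE !modn_offset // jE.
by move: (ltn_ord i) (ltn_ord ((pi^-1)%g x)); case: ifP; case: ifP; lia.
Qed.

Lemma mem_diag_part (p : 'I_n * 'I_n) (x : 'I_n) : p \in diagonals n ->
  (x \in cyc_part pi p.1 p.2) = (p.1 < (pi^-1)%g x <= p.1 + p.2).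
Proof.
rewrite !inE modn_offset // => /and3P [_ _ wrap].
by move: (ltn_ord ((pi^-1)%g x)); case: ifP; lia.
Qed.

Lemma mem_diag_part_at (p : 'I_n * 'I_n) (k : nat) (kn : k < n) :
  p \in diagonals n -> (pi (Ordinal kn) \in cyc_part pi p.1 p.2) = (p.1 < k <= p.1 + p.2).
Proof. by move/mem_diag_part->; rewrite permK. Qed.

Lemma circ_diag_split (s : nsplit n) :
  circ pi (val s) -> exists2 p, p \in diagonals n & val s = diag_split pi p.
Proof.
move=> [i [m sE]].
have [A /and3P [/eqP sA A1 A2]] := existsP (valP s).
have [C1 C2] : 1 < #|cyc_part pi i m| /\ 1 < #|~: cyc_part pi i m|.
  have : cyc_part pi i m \in val s by rewrite sE set21.
  by rewrite sA => /set2P [->|->]; rewrite ?setCK.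
have m2 : 1 < m by apply: contraTT C1; rewrite -!leqNgt; exact: card_cyc_part_le1.
have mn : m <= n - 2.
  by apply: contraTT C2; rewrite -!leqNgt => nm; apply: card_cyc_partC_le1; lia.
have ilt := ltn_ord i.
have mlt : m < n by lia.
case: (ltnP (i + m) n) => wrap.
  by exists (i, Ordinal mlt); rewrite ?inE //=; apply/and3P; split.
have jn : i + m - n < n by lia.
have nmn : n - m < n by lia.
exists (Ordinal jn, Ordinal nmn); first by rewrite inE /=; lia.
by rewrite sE /diag_split /= (@cyc_part_wrapC i m (Ordinal jn)) // setCK setUC.
Qed.

Lemma diag_split_inj : {in diagonals n &, injective (diag_split pi)}.
Proof.
move=> [a b] [c d] ab cd E.
have n0 : 0 < n by apply: leq_ltn_trans (ltn_ord a).
have := ab; have := cd; rewrite !inE /= => /and3P [? ? ?] /and3P [? ? ?].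
have : cyc_part pi a b \in diag_split pi (c, d) by rewrite -E set21.
case/set2P => [/setP M | /setP /(_ (pi (Ordinal n0)))]; last first.
  by rewrite in_setC (mem_diag_part_at _ ab) (mem_diag_part_at _ cd) /=; lia.
have l1 : a + 1 < n by lia.
have l2 : c + 1 < n by lia.
have l3 : a + b < n by lia.
have l4 : c + d < n by lia.
move: (M (pi (Ordinal l1))) (M (pi (Ordinal l2))) (M (pi (Ordinal l3))) (M (pi (Ordinal l4))).
rewrite !(mem_diag_part_at _ ab) !(mem_diag_part_at _ cd) /= => e1 e2 e3 e4.
have ac : a = c by apply: ord_inj; lia.
have bd : b = d by apply: ord_inj; lia.
by rewrite ac bd.
Qed.

Lemma diag_split_nt (p : 'I_n * 'I_n) : p \in diagonals n -> is_ntsplit (diag_split pi p).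
Proof.
move=> pd; apply/existsP; exists (cyc_part pi p.1 p.2); rewrite /diag_split eqxx /=.
have := pd; rewrite inE => /and3P [p2 pn wrap].
have n0 : 0 < n by lia.
have l1 : p.1 + 1 < n by lia.
have l2 : p.1 + 2 < n by lia.
have ln : n - 1 < n by lia.
apply/andP; split; apply/card_gt1P.
  exists (pi (Ordinal l1)), (pi (Ordinal l2)); rewrite !mem_diag_part_at //=.
  by split; [lia | lia | apply/eqP => /perm_inj /(congr1 val) /=; lia].
(* x_0 lies outside every coded part; so does x_(n-1) when p.1 = 0, and x_(p.1) otherwise. *)
case: (posnP p.1) => p1.
  exists (pi (Ordinal n0)), (pi (Ordinal ln)); rewrite !in_setC !mem_diag_part_at //=.
  by split; [lia | lia | apply/eqP => /perm_inj /(congr1 val) /=; lia].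
exists (pi (Ordinal n0)), (pi p.1); rewrite !in_setC mem_diag_part_at // mem_diag_part // permK.
by split; [lia | lia | apply/eqP => /perm_inj /(congr1 val) /=; lia].
Qed.

Definition circ_splits : {set nsplit n} :=
  [set s | val s \in diag_split pi @: diagonals n].

Lemma sub_circ_splits (sigma : {set nsplit n}) :
  (forall s, s \in sigma -> circ pi (val s)) -> sigma \subset circ_splits.
Proof.
move=> sigma_circ; apply/subsetP => s /sigma_circ /circ_diag_split [p pd sE].
by rewrite inE sE imset_f.
Qed.

Lemma circ_splits_circ (s : nsplit n) : s \in circ_splits -> circ pi (val s).
Proof. by rewrite inE => /imsetP [p _ ->]; exists p.1, p.2. Qed.

Lemma card_circ_splits : #|circ_splits| = #|diagonals n|.
Proof.
have valE : val @: circ_splits = diag_split pi @: diagonals n.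
  apply/setP => P; apply/imsetP/idP => [[s] | /imsetP [p pd ->]].
    by rewrite inE => sP ->.
  exists (Sub (diag_split pi p) (diag_split_nt pd)); last by rewrite SubK.
  by rewrite inE SubK imset_f.
by rewrite -(card_imset _ val_inj) valE (card_in_imset diag_split_inj).
Qed.

End CircularSplits.

Lemma card_circsys_le (n : nat) (sigma : {set nsplit n}) :
  circsys sigma -> #|sigma| <= #|diagonals n|.
Proof.
by move=> [pi /sub_circ_splits /subset_leq_card]; rewrite card_circ_splits.
Qed.

Lemma complex_dim_circ (n : nat) : 4 <= n ->
  complex_dim (@circ_complex n) ((n * (n - 3))./2 - 1).
Proof.
move=> n4; have cardD : #|diagonals n| = (n * (n - 3))./2.
  by rewrite -card_diagonals ?doubleK //; lia.
split; last by move=> sigma [_ /card_circsys_le]; rewrite cardD; lia.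
exists (circ_splits 1); rewrite card_circ_splits cardD subn1; split => //.
split; last by exists 1%g; exact: circ_splits_circ.
rewrite -card_gt0 card_circ_splits; have := card_diagonals (n := n); lia.
Qed.

Definition unit_open (P : R -> Prop) : Prop :=
  forall t, (0 <= t <= 1)%R -> P t -> exists d, (0 < d)%R /\
    forall s, (0 <= s <= 1)%R -> (Rabs (s - t) < d)%R -> P s.

Lemma unit_interval_connected (P Q : R -> Prop) :
  unit_open P -> unit_open Q -> (forall t, (0 <= t <= 1)%R -> P t \/ Q t) ->
  (forall t, (0 <= t <= 1)%R -> P t -> Q t -> False) -> P 0%R -> P 1%R.
Proof.
move=> Popen Qopen cover disj P0.
pose E t := (0 <= t <= 1)%R /\ forall s, (0 <= s <= t)%R -> P s.
have E0 : E 0%R by split; [lra | move=> s s0; have -> : s = 0%R by lra].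
have Ebound : bound E by exists 1%R => t [[_ ?] _].
have [T [Tub Tlub]] := completeness E Ebound (ex_intro _ 0%R E0).
have T0 : (0 <= T)%R by apply: Tub.
have T1 : (T <= 1)%R by apply: Tlub => t [[_ ?] _].
have Tclose d : (0 < d)%R -> exists t, E t /\ (T - d < t)%R.
  move=> d0; apply: NNPP => far.
  have : (T <= T - d)%R.
    by apply: Tlub => t Et; apply: Rnot_lt_le => ?; apply: far; exists t.
  lra.
have [PT | QT] := cover T (conj T0 T1).
- (* P holds a little beyond T, so T cannot be a supremum below 1. *)
  have [d [d0 Pnear]] := Popen T (conj T0 T1) PT.
  have Enext : E (Rmin 1 (T + d / 2)).
    have m1 := Rmin_l 1 (T + d / 2); have m2 := Rmin_r 1 (T + d / 2).
    have m3 : (0 <= Rmin 1 (T + d / 2))%R by apply: Rmin_glb; lra.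
    split; first lra.
    move=> s [s0 s1]; have [sT | Ts] := Rlt_or_le s T.
      by have [t [[_ Pt] ?]] := Tclose (T - s)%R ltac:(lra); apply: Pt; lra.
    by apply: Pnear; [lra | apply: Rabs_def1; lra].
  have := Tub _ Enext; rewrite /Rmin; case: Rle_dec => [_ ? | _]; last lra.
  by have <- : T = 1%R by lra.
- have [d [d0 Qnear]] := Qopen T (conj T0 T1) QT.
  have [t [[[t0 t1] Pt] Tt]] := Tclose d d0.
  have tT : (t <= T)%R by apply: Tub; split.
  exfalso; apply: (disj t); [lra | apply: Pt; lra | apply: Qnear; [lra | apply: Rabs_def1; lra]].
Qed.

Definition segment (J : finType) (x y : J -> R) (t : R) : J -> R :=
  fun j => (x j + t * (y j - x j))%R.

Lemma segment0 (J : finType) (x y : J -> R) : segment x y 0 = x.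
Proof. by apply: functional_extensionality => j; rewrite /segment; ring. Qed.

Lemma segment1 (J : finType) (x y : J -> R) : segment x y 1 = y.
Proof. by apply: functional_extensionality => j; rewrite /segment; ring. Qed.

Lemma segment_ball (J : finType) (x y : J -> R) (eps : R) : (0 < eps)%R ->
  exists d, (0 < d)%R /\
    forall s t, (Rabs (s - t) < d)%R -> ball (segment x y t) eps (segment x y s).
Proof.
move=> eps0; pose M := (Rsum (fun j => Rabs (y j - x j)) + 1)%R.
have yxM j : (Rabs (y j - x j) <= M)%R.
  by have := Rsum_ge_term j (fun i => Rabs_pos (y i - x i)); rewrite /M; lra.
have M1 : (1 <= M)%R.
  by have := Rsum_ge0 (fun i => Rabs_pos (y i - x i)); rewrite /M; lra.
exists (eps / M)%R; split; first by apply: Rdiv_lt_0_compat; lra.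
move=> s t st j; rewrite /segment.
rewrite (_ : (_ - _ = (s - t) * (y j - x j))%R); last by ring.
rewrite Rabs_mult.
have : (Rabs (s - t) * Rabs (y j - x j) <= Rabs (s - t) * M)%R.
  by apply: Rmult_le_compat_l => //; exact: Rabs_pos.
have : (Rabs (s - t) * M < eps / M * M)%R by apply: Rmult_lt_compat_r; lra.
have : (eps / M * M = eps)%R by field; lra.
lra.
Qed.

Lemma segment_connected (J : finType) (A U W : (J -> R) -> Prop) (x y : J -> R) :
  relopen A U -> relopen A W -> (forall z, A z -> U z \/ W z) ->
  (forall z, A z -> U z -> W z -> False) ->
  (forall t, (0 <= t <= 1)%R -> A (segment x y t)) -> U x -> U y.
Proof.
move=> Uopen Wopen cover disj Aseg Ux; rewrite -(segment1 x y).
have pullback V : relopen A V -> unit_open (fun t => V (segment x y t)).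
  move=> Vopen t t01 Vt; have [eps [eps0 Vball]] := Vopen _ (Aseg t t01) Vt.
  have [d [d0 near]] := segment_ball x y eps0.
  by exists d; split => // s s01 st; apply: Vball; [exact: Aseg | exact: near].
apply: (unit_interval_connected (pullback _ Uopen) (pullback _ Wopen)).
- by move=> t /Aseg /cover.
- by move=> t /Aseg /disj.
- by rewrite segment0.
Qed.

Lemma Rsum_segment (J : finType) (x y : J -> R) (t : R) :
  Rsum (segment x y t) = (Rsum x + t * (Rsum y - Rsum x))%R.
Proof.
rewrite /Rsum /segment.
apply: (big_rec3 (fun u v w => u = v + t * (w - v))%R); first ring.
by move=> i u v w _ ->; ring.
Qed.

Section Chambers.
Variables (n : nat) (pi : {perm 'I_n}).

Lemma chamber_segment (x y : nsplit n -> R) (t : R) :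
  chamber pi x -> chamber pi y -> (0 <= t <= 1)%R -> chamber pi (segment x y t).
Proof.
move=> [x0 [x1 xcirc]] [y0 [y1 ycirc]] t01; split; [|split].
- move=> s; rewrite /segment.
  have : (0 <= (1 - t) * x s)%R by apply: Rmult_le_pos; [lra | exact: x0].
  have : (0 <= t * y s)%R by apply: Rmult_le_pos; [lra | exact: y0].
  lra.
- by rewrite Rsum_segment x1 y1; ring.
- move=> s xys; have [xs | xs] := Req_dec (x s) 0%R; last exact: xcirc.
  have [ys | ys] := Req_dec (y s) 0%R; last exact: ycirc.
  by exfalso; apply: xys; rewrite /segment xs ys; ring.
Qed.

Lemma chamber_unitv (s : nsplit n) : circ pi (val s) -> chamber pi (unitv s).
Proof.
move=> scirc; split; [exact: unitv_ge0 | split; first exact: Rsum_unitv].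
by move=> t; rewrite /unitv; case: eqP => [-> //|_ []].
Qed.

End Chambers.

Lemma perm_of_enum (n : nat) (L : seq 'I_n) : size L = n -> (forall x, x \in L) ->
  exists pi : {perm 'I_n}, forall x, (pi^-1)%g x = index x L :> nat.
Proof.
move=> Ln Lall.
have idx_lt x : index x L < n by have := index_mem x L; rewrite Lall Ln.
have idx_inj : injective (fun x => Ordinal (idx_lt x)).
  by move=> x y /(congr1 val) /= xy; rewrite -(nth_index x (Lall x)) xy nth_index.
by exists (perm idx_inj)^-1%g => x; rewrite invgK permE.
Qed.

Lemma interval_cyc_part (n : nat) (pi : {perm 'I_n}) (B : {set 'I_n}) (l r : nat) :
  (forall x, (x \in B) = (l <= (pi^-1)%g x < r)) -> l <= r -> r <= n ->
  (exists y, y \notin B) -> exists (i : 'I_n) (m : nat), B = cyc_part pi i m.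
Proof.
move=> BE lr rn [y]; rewrite BE => yNB.
have yn := ltn_ord ((pi^-1)%g y).
(* The interval of positions [l, r) starts just after position l - 1 (mod n). *)
case: (posnP l) => l0.
  have n1 : n - 1 < n by lia.
  exists (Ordinal n1), r; apply/setP => x; rewrite BE inE /= modn_offset //.
  by move: (ltn_ord ((pi^-1)%g x)); case: ifP; lia.
have l1 : l - 1 < n by lia.
exists (Ordinal l1), (r - l); apply/setP => x; rewrite BE inE /= modn_offset //.
by move: (ltn_ord ((pi^-1)%g x)); case: ifP; lia.
Qed.

Lemma count_and_partition (T : Type) (a c : pred T) (s : seq T) :
  count (predI a c) s + count (predI a (predC c)) s +
  count (predI (predC a) (predC c)) s + count (predI (predC a) c) s = size s.
Proof. by elim: s => //= x s IH; case: (a x); case: (c x) => /=; lia. Qed.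

Lemma perm_nested_intervals (n : nat) (A C : {set 'I_n}) :
  exists (pi : {perm 'I_n}) (a b c : nat), [/\ b <= a <= c, c <= n,
    forall x, (x \in A) = ((pi^-1)%g x < a) &
    forall x, (x \notin C) = (b <= (pi^-1)%g x < c)].
Proof.
pose L1 := [seq x <- ord_enum n | (x \in A) && (x \in C)].
pose L2 := [seq x <- ord_enum n | (x \in A) && (x \notin C)].
pose L3 := [seq x <- ord_enum n | (x \notin A) && (x \notin C)].
pose L4 := [seq x <- ord_enum n | (x \notin A) && (x \in C)].
pose L := L1 ++ L2 ++ L3 ++ L4.
have Lall x : x \in L.
  by rewrite !mem_cat !mem_filter !mem_ord_enum; case: (x \in A); case: (x \in C).
have Ln : size L = n.
  rewrite !size_cat !size_filter addnA addnA.
  rewrite (count_and_partition (mem A) (mem C) (ord_enum n)).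
  by rewrite -(size_map val) val_ord_enum size_iota.
have [pi piE] := perm_of_enum Ln Lall.
exists pi, (size L1 + size L2), (size L1), (size L1 + size L2 + size L3).
split; [lia | by move: Ln; rewrite !size_cat; lia | |];
  move=> x; rewrite piE !index_cat;
  move: (index_mem x L1) (index_mem x L2) (index_mem x L3) (index_mem x L4);
  rewrite !mem_filter !mem_ord_enum; case: (x \in A); case: (x \in C) => /=; lia.
Qed.

Lemma circ_common (n : nat) (s t : nsplit n) :
  exists pi : {perm 'I_n}, circ pi (val s) /\ circ pi (val t).
Proof.
have [A /and3P [/eqP sA A1 A2]] := existsP (valP s).
have [C /and3P [/eqP tC C1 C2]] := existsP (valP t).
have [pi [a [b [c [/andP [ba ac] cn AE CE]]]]] := perm_nested_intervals A C.
have [y yNA] : exists y, y \notin A.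
  have /card_gt0P [y yA] : 0 < #|~: A| by lia.
  by exists y; rewrite -in_setC.
have [z zC] : exists z, z \notin ~: C.
  have /card_gt0P [z zC] : 0 < #|C| by lia.
  by exists z; rewrite in_setC zC.
exists pi; split.
  have [i [m AcE]] :=
    interval_cyc_part (l := 0) AE (leq0n a) (leq_trans ac cn) (ex_intro _ y yNA).
  by exists i, m; rewrite sA AcE.
have CE' x : (x \in ~: C) = (b <= (pi^-1)%g x < c) by rewrite in_setC CE.
have [i [m CcE]] := interval_cyc_part CE' (leq_trans ba ac) cn (ex_intro _ z zC).
by exists i, m; rewrite tC -CcE setCK setUC.
Qed.

Lemma network_connected (n : nat) : connected (@network n).
Proof.
move=> U W Uopen Wopen cover disj.
have [[x [[pi xch] Ux]] | noU] := classic (exists x, network x /\ U x); last first.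
  by left => x nx Ux; apply: noU; exists x.
have [[y [[sg ych] Wy]] | noW] := classic (exists y, network y /\ W y); last first.
  by right => y ny Wy; apply: noW; exists y.
exfalso.
have chamber_U pi' a b : chamber pi' a -> chamber pi' b -> U a -> U b.
  move=> ach bch; apply: (segment_connected Uopen Wopen cover disj) => t t01.
  by exists pi'; exact: chamber_segment.
have [s xs] := Rsum1_support (proj1 (proj2 xch)).
have [t yt] := Rsum1_support (proj1 (proj2 ych)).
have [rho [scirc tcirc]] := circ_common s t.
have Us := chamber_U _ _ _ xch (chamber_unitv (proj2 (proj2 xch) s xs)) Ux.
have Ut := chamber_U _ _ _ (chamber_unitv scirc) (chamber_unitv tcirc) Us.
have Uy := chamber_U _ _ _ (chamber_unitv (proj2 (proj2 ych) t yt)) ych Ut.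
by apply: (disj y) => //; exists sg.
Qed.

Theorem proposition5 (n : nat) (hn : 4 <= n) :
  (forall (pi : {perm 'I_n}) (S : {set nsplit n}),
     S != set0 -> (forall s, s \in S -> circ pi (val s)) ->
     forall x, chamber_face pi S x <-> conv (@unitv n) S x) /\
  geom_complex (@unitv n) (@circ_complex n) /\
  (forall x, @network n x <-> polyhedron (@unitv n) (@circ_complex n) x) /\
  (forall S T, circ_complex S -> circ_complex T ->
     (forall x, conv (@unitv n) S x <-> conv (@unitv n) T x) -> S = T) /\
  complex_dim (@circ_complex n) ((n * (n - 3))./2 - 1) /\
  connected (@network n).
Proof.
split; first by move=> pi S _; exact: chamber_faceE.
split; first exact: geom_complex_circ.
split; first exact: network_polyhedronE.
split; first by move=> S T _ _; exact: conv_unitv_inj.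
split; first exact: complex_dim_circ.
exact: network_connected.
Qed.
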